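(* Let $p=\tfrac12$. Then $K_\infty\phi=2\phi$. Consequently $\mu_n=\langle\phi,K_\infty^n\phi\rangle=2^n$ for all $n\ge0$, and the rooted spectral measure $\nu_\phi$ (the unique finite positive Borel measure with $\langle\phi,f(K_\infty)\phi\rangle=\int f\,d\nu_\phi$ for bounded Borel $f$) is $\nu_\phi=\delta_2$.
   Context: Let $S_0(x)=x/3$, $S_2(x)=(x+2)/3$ on $[0,1]$ and let $C$ be the middle-third Cantor set. $\mu=\mu_{1/2}$ is the unique Borel probability measure on $[0,1]$ with $\mu=\frac12\mu\circ S_0^{-1}+\frac12\mu\circ S_2^{-1}$. For words $w\in\{0,2\}^n$, $S_w=S_{w_1}\circ\cdots\circ S_{w_n}$, $C_w=S_w(C)$. Inner product $\langle f,g\rangle=\int\overline fg\,d\mu$; $\phi=1_C$. $K_mf=\sum_{|u|\le m}\langle1_{C_u},f\rangle1_{C_u}$ and $K_\infty=\lim_{m\to\infty}K_m$ in operator norm on $L^2(\mu)$ (this limit exists and is compact, positive, self-adjoint). *)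

From HB Require Import structures.
From mathcomp Require Import all_boot all_order all_algebra.
From mathcomp Require Import all_classical all_reals all_analysis.
Set Implicit Arguments. Unset Strict Implicit. Unset Printing Implicit Defensive.
Import Order.TTheory GRing.Theory Num.Theory.
Import numFieldNormedType.Exports.
Local Open Scope classical_set_scope.
Local Open Scope ring_scope.

Section Cantor.
Variable R : realType.

(** The two similitudes: [S false] is S_0 : x |-> x/3 and [S true] is
    S_2 : x |-> (x+2)/3 (viewed as maps R -> R). *)
Definition S (b : bool) (x : R) : R := if b then (x + 2) / 3 else x / 3.

Definition Sw (w : seq bool) : R -> R := foldr (fun b g => S b \o g) idfun w.

Definition cantor_set : set R :=
  [set x | forall n : nat, exists2 w : seq bool, size w = n & (Sw w @` `[0, 1]) x].

Definition Cw (w : seq bool) : set R := Sw w @` cantor_set.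

Definition phi : R -> R := \1_cantor_set.

End Cantor.

Section L2.
Context {R : realType} (mu : {measure set R -> \bar R}).
Local Open Scope ereal_scope.

Definition inner (f g : R -> R) : \bar R := \int[mu]_x (f x * g x)%:E.

Definition sqnorm (f : R -> R) : \bar R := \int[mu]_x ((f x) ^+ 2)%:E.

Definition L2 (f : R -> R) : Prop :=
  measurable_fun setT f /\ sqnorm f < +oo.

Definition Km (m : nat) (f : R -> R) : R -> R := fun x =>
  (\sum_(k < m.+1) \sum_(u : k.-tuple bool)
     fine (inner (\1_(Cw u)) f) * \1_(Cw u) x)%R.

End L2.

Section Operators.
Context {R : realType} (mu : {measure set R -> \bar R}).
Local Open Scope ereal_scope.

Definition cantor_measure : Prop :=
  [/\ mu setT = 1,
      mu (~` `[0%R, 1%R]) = 0 &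
      forall A : set R, measurable A ->
        mu A = (2^-1)%:E * mu (S false @^-1` A) + (2^-1)%:E * mu (S true @^-1` A)].

(** equality in L^2(mu), i.e. mu-almost everywhere *)
Definition aeeq (f g : R -> R) : Prop := {ae mu, forall x, f x = g x}.

Definition opnorm_limit (K : (R -> R) -> R -> R) : Prop :=
  (forall f, L2 mu f -> L2 mu (K f)) /\
  forall e : R, (0 < e)%R -> exists M : nat, forall m : nat, (M <= m)%N ->
    forall f, L2 mu f -> sqnorm mu (fun x => Km mu m f x - K f x)%R <= e%:E * sqnorm mu f.

Definition bounded_borel (f : R -> R) : Prop :=
  measurable_fun setT f /\ exists M : R, forall x, (`|f x| <= M)%R.

(** clamp_c(x) = max(-c, min(c, x)): equals the identity on [-c, c]. *)
Definition clamp (c : R) (x : R) : R := (Num.max (- c) (Num.min c x))%R.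

(** The (real) bounded Borel functional calculus f |-> Phi f = f(K) of the
    bounded self-adjoint operator K on L^2(mu):  a *-homomorphism from bounded
    Borel functions to bounded operators, bounded by the sup norm, sequentially
    continuous for bounded pointwise convergence (strong operator topology),
    sending the identity (on [-c,c] with c >= ||K||) to K.  Operators act on
    representatives; equalities are mu-a.e. *)
Record borel_fcalc (K : (R -> R) -> R -> R)
    (Phi : (R -> R) -> (R -> R) -> R -> R) : Prop := {
  fc_L2 : forall f h, bounded_borel f -> L2 mu h -> L2 mu (Phi f h);
  fc_ae : forall f h1 h2, bounded_borel f -> L2 mu h1 -> L2 mu h2 ->
    aeeq h1 h2 -> aeeq (Phi f h1) (Phi f h2);
  fc_linear : forall f (a : R) h1 h2, bounded_borel f -> L2 mu h1 -> L2 mu h2 ->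
    aeeq (Phi f (fun x => h1 x + a * h2 x)%R)
         (fun x => Phi f h1 x + a * Phi f h2 x)%R;
  fc_add : forall f g (a : R) h, bounded_borel f -> bounded_borel g -> L2 mu h ->
    aeeq (Phi (fun x => f x + a * g x)%R h)
         (fun x => Phi f h x + a * Phi g h x)%R;
  fc_one : forall h, L2 mu h -> aeeq (Phi (cst 1%R) h) h;
  fc_mul : forall f g h, bounded_borel f -> bounded_borel g -> L2 mu h ->
    aeeq (Phi (fun x => f x * g x)%R h) (Phi f (Phi g h));
  fc_selfadj : forall f h1 h2, bounded_borel f -> L2 mu h1 -> L2 mu h2 ->
    inner mu (Phi f h1) h2 = inner mu h1 (Phi f h2);
  fc_bound : forall f (M : R) h, bounded_borel f -> (forall x, `|f x| <= M)%R ->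
    L2 mu h -> sqnorm mu (Phi f h) <= (M ^+ 2)%:E * sqnorm mu h;
  fc_cont : forall (fn : nat -> R -> R) (f : R -> R) (M : R) h,
    (forall n, measurable_fun setT (fn n)) -> (forall n x, `|fn n x| <= M)%R ->
    (forall x, fn n x @[n --> \oo] --> f x) -> L2 mu h ->
    sqnorm mu (fun x => Phi (fn n) h x - Phi f h x)%R @[n --> \oo] --> 0;
  fc_id : forall c : R, (0 <= c)%R ->
    (forall h, L2 mu h -> sqnorm mu (K h) <= (c ^+ 2)%:E * sqnorm mu h) ->
    forall h, L2 mu h -> aeeq (Phi (clamp c) h) (K h)
}.

End Operators.

(* For p = 1/2 every C_u with |u| = k has mass 2^-k, and the C_u of a fixed
   length k tile C.  Hence <1_{C_u}, phi> = 2^-|u| and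
   K_m phi = (sum_{k <= m} 2^-k) phi = (2 - 2^-m) phi, which converges to 2 phi.
   For the spectral measure, take c > 2 bounding K and y = clamp_c - 2: then
   y(K) phi = K phi - 2 phi = 0 and y vanishes only at 2.  A bounded Borel g with
   g(2) = 0 is the bounded pointwise limit of functions q_n y with q_n bounded,
   so g(K) phi = lim q_n(K) y(K) phi = 0, and <phi, f(K) phi> = f(2). *)

From HB Require Import structures.
From mathcomp Require Import all_boot all_order all_algebra.
From mathcomp Require Import all_classical all_reals all_analysis.
From mathcomp Require Import lra ring measurable_realfun.
Import Order.TTheory GRing.Theory Num.Theory.
Import numFieldNormedType.Exports.
Local Open Scope classical_set_scope.
Local Open Scope ring_scope.
Set Implicit Arguments. Unset Strict Implicit. Unset Printing Implicit Defensive.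

Section cantor_geometry.
Context {R : realType}.
Implicit Types (b : bool) (u v w : seq bool) (x y : R) (A : set R).

Local Notation I01 := (`[0, 1]%classic : set R).
Local Notation C := (@cantor_set R).

Lemma I01P x : I01 x <-> 0 <= x <= 1.
Proof. by rewrite /= in_itv. Qed.

Definition Sinv b y : R := 3 * y - (if b then 2 else 0).

Lemma SK b : cancel (@S R b) (Sinv b).
Proof. by move=> x; rewrite /Sinv /S; case: b; field. Qed.

Lemma SinvK b : cancel (Sinv b) (@S R b).
Proof. by move=> y; rewrite /Sinv /S; case: b; field. Qed.

Lemma S_inj b : injective (@S R b).
Proof. exact: can_inj (SK b). Qed.

Lemma S_itv b x : I01 x -> I01 (S b x).
Proof. by rewrite !I01P /S => /andP[? ?]; case: b; apply/andP; split; lra. Qed.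

Lemma S_itv_disjoint x y : I01 x -> I01 y -> S false x <> S true y.
Proof. by rewrite !I01P /S => /andP[? ?] /andP[? ?]; lra. Qed.

Lemma Sw_cons b w : Sw (b :: w) = S b \o @Sw R w.
Proof. by []. Qed.

Lemma Sw_cat u v x : Sw (u ++ v) x = Sw u (@Sw R v x).
Proof. by elim: u => [|b u IH] //=; rewrite IH. Qed.

Lemma Sw_inj w : injective (@Sw R w).
Proof. by elim: w => [|b w IH] //= x y /S_inj /IH. Qed.

Lemma Sw_itv w x : I01 x -> I01 (@Sw R w x).
Proof. by elim: w => [//|b w IH] /IH; apply: S_itv. Qed.

Lemma Sw_itv_word_uniq u v x y : size u = size v -> I01 x -> I01 y ->
  Sw u x = @Sw R v y -> u = v.
Proof.
elim: u v => [|b u IH] [|c v] //= [] suv Ix Iy.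
have [Iu Iv] := (Sw_itv u Ix, Sw_itv v Iy).
case: b; case: c => e.
- by congr cons; apply: (IH v) => //; apply: S_inj e.
- by have := S_itv_disjoint Iv Iu; rewrite e.
- by have := S_itv_disjoint Iu Iv.
- by congr cons; apply: (IH v) => //; apply: S_inj e.
Qed.

Lemma image_S b A : S b @` A = Sinv b @^-1` A.
Proof.
apply/seteqP; split => [_ [x Ax <-]|y Ay] /=; first by rewrite SK.
by exists (Sinv b y); rewrite ?SinvK.
Qed.

Lemma measurable_S b : measurable_fun setT (@S R b).
Proof.
have -> : @S R b = (fun x => (x + (if b then 2 else 0)) * 3^-1).
  by apply/funext => x; rewrite /S; case: b; rewrite ?addr0.
apply: measurable_funM; last exact: measurable_cst.
by apply: measurable_funD; [exact: measurable_id|exact: measurable_cst].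
Qed.

Lemma measurable_Sinv b : measurable_fun setT (Sinv b).
Proof. by apply: measurable_funB; [exact: mulrl_measurable|exact: measurable_cst]. Qed.

Lemma measurable_image_S b A : measurable A -> measurable (S b @` A).
Proof. by move=> mA; rewrite image_S -[_ @^-1` _]setTI; exact: measurable_Sinv. Qed.

Lemma measurable_image_Sw w A : measurable A -> measurable (@Sw R w @` A).
Proof.
elim: w => [|b w IH] mA; first by rewrite image_id.
by rewrite Sw_cons -image_comp; apply: measurable_image_S; apply: IH.
Qed.

Fixpoint cantor_stage n : set R :=
  if n is n'.+1 then S false @` cantor_stage n' `|` S true @` cantor_stage n' else I01.

Lemma cantor_stageP n x : cantor_stage n x <-> exists2 w, size w = n & (Sw w @` I01) x.
Proof.
elim: n x => [|n IH] x /=.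
  split=> [Ix|[[|//] _ [y Iy <-]]] //; by exists [::]; last exists x.
split=> [[] [y /IH [w sw [z Iz <-]] <-]|[[//|b w] /= [sw] [z Iz <-]]].
- by exists (false :: w); rewrite /= ?sw //; exists z.
- by exists (true :: w); rewrite /= ?sw //; exists z.
have Ew : cantor_stage n (Sw w z) by apply/IH; exists w => //; exists z.
by case: b; [right|left]; exists (Sw w z).
Qed.

Lemma cantor_stage_itv n : cantor_stage n `<=` I01.
Proof. by move=> x /cantor_stageP[w _ [z Iz <-]]; apply: Sw_itv. Qed.

Lemma measurable_cantor_stage n : measurable (cantor_stage n).
Proof.
elim: n => [|n IH] /=; first exact: measurable_itv.
by apply: measurableU; apply: measurable_image_S.
Qed.

Lemma cantor_stage_nonincreasing : nonincreasing_seq cantor_stage.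
Proof.
apply/nonincreasing_seqP => n; apply/subsetPset.
elim: n => [|n IH] /= x [] [y Ey <-].
- exact: S_itv.
- exact: S_itv.
- by left; exists y => //; apply: IH.
- by right; exists y => //; apply: IH.
Qed.

Lemma cantor_setE : C = \bigcap_n cantor_stage n.
Proof. by apply/seteqP; split=> x /= Cx n; [move=> _|]; apply/cantor_stageP/Cx. Qed.

Lemma measurable_cantor_set : measurable C.
Proof. by rewrite cantor_setE; apply: bigcapT_measurable; exact: measurable_cantor_stage. Qed.

Lemma cantor_set_itv : C `<=` I01.
Proof. by rewrite cantor_setE => x /(_ 0%N I). Qed.

Lemma image_S_cantor_set b : S b @` C `<=` C.
Proof.
move=> _ [x Cx <-] [|n].
  by exists [::] => //; exists (S b x) => //; apply/S_itv/cantor_set_itv.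
have [w sw [z Iz e]] := Cx n.
by exists (b :: w); rewrite /= ?sw //; exists z; rewrite //= e.
Qed.

Lemma Cw_cons b w : Cw (b :: w) = S b @` @Cw R w.
Proof. by rewrite /Cw Sw_cons -image_comp. Qed.

Lemma Cw_sub w : @Cw R w `<=` C.
Proof.
elim: w => [|b w IH]; first by rewrite /Cw image_id.
by rewrite Cw_cons => _ [y Cy <-]; apply: image_S_cantor_set; exists y; first exact: IH.
Qed.

Lemma measurable_Cw w : measurable (@Cw R w).
Proof. exact: measurable_image_Sw measurable_cantor_set. Qed.

Lemma Cw_word_uniq u v x : size u = size v -> Cw u x -> @Cw R v x -> u = v.
Proof.
move=> suv [y /cantor_set_itv Iy <-] [z /cantor_set_itv Iz e].
exact: Sw_itv_word_uniq suv Iy Iz (esym e).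
Qed.

(* A point of C lies in some S_u([0,1]) with |u| = k; every deeper address of it
   starts with u, so its preimage under S_u lies in C. *)
Lemma cantor_set_cover k x : C x -> exists2 u, size u = k & @Cw R u x.
Proof.
move=> Cx; have [u su [y Iy xE]] := Cx k.
have deep n : exists2 w, size w = n & (Sw w @` I01) y.
  have [w sw [z Iz wz]] := Cx (k + n)%N.
  rewrite -(cat_take_drop k w) Sw_cat in wz.
  have sk : size (take k w) = k by rewrite size_takel // sw leq_addr.
  have tw : take k w = u.
    by apply: Sw_itv_word_uniq (Sw_itv _ Iz) Iy (etrans wz (esym xE)); rewrite sk su.
  rewrite tw in wz; exists (drop k w); first by rewrite size_drop sw addKn.
  by exists z => //; rewrite -xE in wz; apply: Sw_inj wz.
by exists u => //; exists y.
Qed.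

Lemma sum_indic_Cw k x : \sum_(u : k.-tuple bool) \1_(@Cw R u) x = phi x.
Proof.
rewrite /phi indicE; case: (boolP (x \in C)) => [/set_mem Cx|/negP Cx].
  have [u /eqP su Cux] := cantor_set_cover k Cx.
  rewrite (bigD1 (Tuple su)) //= indicE mem_set // big1 ?addr0 // => v vu.
  rewrite indicE memNset // => Cvx; move/eqP: vu; apply; apply: val_inj.
  by apply: Cw_word_uniq Cvx Cux; rewrite size_tuple (eqP su).
by rewrite big1 // => u _; rewrite indicE memNset // => /Cw_sub/mem_set.
Qed.

End cantor_geometry.

Section cantor_measure.
Context {R : realType} (mu : {measure set R -> \bar R}).
Hypothesis mu_cantor : cantor_measure mu.
Local Open Scope ereal_scope.
Local Notation I01 := (`[0%R, 1%R]%classic : set R).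
Local Notation C := (@cantor_set R).

Lemma mu_itv : mu I01 = 1.
Proof.
have [muT muNI _] := mu_cantor.
have mI : measurable I01 by exact: measurable_itv.
have : mu (I01 `|` ~` I01) = mu I01 + mu (~` I01).
  by have := measureU mu mI (measurableC mI) (setICr _).
by rewrite setUv muT muNI adde0.
Qed.

(* The two first-level pieces sit in disjoint halves of [0,1], so only one
   term of the self-similarity relation contributes. *)
Lemma mu_image_S b (A : set R) : measurable A -> A `<=` I01 ->
  mu (S b @` A) = 2^-1%:E * mu A.
Proof.
move=> mA AI; have [_ muNI mu_self] := mu_cantor.
have mSA := measurable_image_S b mA.
have preS : S b @^-1` (S b @` A) = A.
  by apply/seteqP; split=> [x [a Aa /S_inj <-]|x Ax] //; exists x.
have preNS : mu (S (~~ b) @^-1` (S b @` A)) = 0.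
  have mI : measurable I01 by exact: measurable_itv.
  apply: (subset_measure0 _ (measurableC mI) _ muNI).
    by rewrite -[_ @^-1` _]setTI; apply: measurable_S.
  move=> x [a Aa e] Ix.
  have := Sw_itv_word_uniq (u := [:: ~~ b]) (v := [:: b]) erefl Ix (AI a Aa) (esym e).
  by case: b {e mSA preS}.
by rewrite mu_self //; case: b preS preNS {mSA} => /= -> ->; rewrite ?mule0 ?adde0 ?add0e.
Qed.

Lemma mu_cantor_stage n : mu (cantor_stage n) = 1.
Proof.
elim: n => [|n IH] /=; first exact: mu_itv.
set E := cantor_stage n.
have mE : measurable E := measurable_cantor_stage n.
have EI : E `<=` I01 := @cantor_stage_itv R n.
have disj : S false @` E `&` S true @` E = set0.
  apply/seteqP; split=> // _ [[a Ea <-] [b Eb e]].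
  exact: S_itv_disjoint (EI a Ea) (EI b Eb) (esym e).
have -> : mu (S false @` E `|` S true @` E) = mu (S false @` E) + mu (S true @` E).
  by have := measureU mu (measurable_image_S false mE) (measurable_image_S true mE) disj.
rewrite !mu_image_S ?IH // -EFinM -EFinD; congr (_%:E); lra.
Qed.

Lemma mu_cantor_set : mu C = 1.
Proof.
have := nonincreasing_cvg_mu (mu := mu) (F := cantor_stage) _ measurable_cantor_stage.
rewrite -cantor_setE mu_cantor_stage ltry.
move=> /(_ erefl measurable_cantor_set cantor_stage_nonincreasing).
have -> : mu \o cantor_stage = cst 1 by apply/funext => n /=; rewrite mu_cantor_stage.
by move/cvg_lim => <- //; rewrite lim_cst.
Qed.

Lemma mu_Cw w : mu (Cw w) = ((2^-1) ^+ size w)%:E.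
Proof.
elim: w => [|b w IH]; first by rewrite /Cw image_id mu_cantor_set expr0.
rewrite Cw_cons mu_image_S ?IH -?EFinM ?exprS //; first exact: measurable_Cw.
by move=> x /Cw_sub /cantor_set_itv.
Qed.

End cantor_measure.

Section square_integrable.
Context {R : realType} (mu : {measure set R -> \bar R}).
Local Open Scope ereal_scope.
Implicit Types f g p q : R -> R.

Lemma measurable_EFin_sqr f : measurable_fun setT f ->
  measurable_fun setT (fun x => (f x ^+ 2)%:E).
Proof. by move=> mf; apply/measurable_EFinP; exact: measurable_funX. Qed.

Lemma sqnorm_ge0 f : 0 <= sqnorm mu f.
Proof. by apply: integral_ge0 => x _; rewrite lee_fin sqr_ge0. Qed.

Lemma L2_sqnormE f : L2 mu f -> sqnorm mu f = (fine (sqnorm mu f))%:E.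
Proof. by case=> _ fin; rewrite fineK // ge0_fin_numE // sqnorm_ge0. Qed.

Lemma sqnormN f : sqnorm mu (fun x => - f x)%R = sqnorm mu f.
Proof. by apply: eq_integral => x _; rewrite sqrrN. Qed.

Lemma sqnormD_le p q : measurable_fun setT p -> measurable_fun setT q ->
  sqnorm mu (fun x => p x + q x)%R <= 2%:E * sqnorm mu p + 2%:E * sqnorm mu q.
Proof.
move=> mp mq.
have sqr_ge0E f x : setT x -> 0 <= (f x ^+ 2)%:E by rewrite lee_fin sqr_ge0.
have twice_sqr_ge0E f x : setT x -> 0 <= (2 * f x ^+ 2)%:E.
  by move=> _; rewrite lee_fin mulr_ge0 ?sqr_ge0.
have measurable_twice_sqr f : measurable_fun setT f ->
    measurable_fun setT (fun x => (2 * f x ^+ 2)%:E).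
  by move=> mf; apply/measurable_EFinP/measurable_funM/measurable_funX => //;
    exact: measurable_cst.
have -> : 2%:E * sqnorm mu p + 2%:E * sqnorm mu q =
    \int[mu]_x ((2 * p x ^+ 2)%:E + (2 * q x ^+ 2)%:E).
  rewrite ge0_integralD //; try exact: measurable_twice_sqr; try exact: twice_sqr_ge0E.
  by rewrite /sqnorm -!(ge0_integralZl_EFin _ _ (sqr_ge0E _) (measurable_EFin_sqr _)).
rewrite /sqnorm; apply: ge0_le_integral => //.
- by move=> x _; rewrite lee_fin sqr_ge0.
- exact: (measurable_EFin_sqr (measurable_funD mp mq)).
- by apply: emeasurable_funD; exact: measurable_twice_sqr.
move=> x _; rewrite -EFinD lee_fin.
by have := sqr_ge0 (p x - q x); nra.
Qed.

Lemma sqnorm_ae_eq f g : measurable_fun setT f -> measurable_fun setT g ->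
  aeeq mu f g -> sqnorm mu f = sqnorm mu g.
Proof.
move=> mf mg fg; apply: ae_eq_integral => //; try exact: measurable_EFin_sqr.
by apply: filterS fg => x -> _.
Qed.

Lemma sqnorm_eq0 g : measurable_fun setT g -> sqnorm mu g = 0 ->
  {ae mu, forall x, g x = 0%R}.
Proof.
move=> mg g0.
have : \int[mu]_x `|(g x ^+ 2)%:E| = 0.
  by rewrite -g0; apply: eq_integral => x _; rewrite gee0_abs // lee_fin sqr_ge0.
move/(ae_eq_integral_abs mu measurableT (measurable_EFin_sqr mg)).
by apply: filterS => x /(_ I) [] /eqP; rewrite sqrf_eq0 => /eqP.
Qed.

Lemma integral_scaled_indic (a : R) (A : set R) : measurable A ->
  \int[mu]_x (a * \1_A x)%:E = a%:E * mu A.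
Proof.
move=> mA; rewrite -(integral_cst mu mA) integral_mkcond.
apply: eq_integral => x _; rewrite patchE indicE.
by case: (x \in A); rewrite ?mulr1 ?mulr0.
Qed.

Lemma abs_inner_indic_le (A : set R) h : measurable A -> measurable_fun setT h ->
  `|fine (inner mu \1_A h)|%:E <= \int[mu]_x `|h x|%:E.
Proof.
move=> mA mh; have mAh : measurable_fun setT (fun x => (\1_A x * h x)%:E).
  by apply/measurable_EFinP; apply: measurable_funM => //; exact: measurable_indic.
have : `|inner mu \1_A h| <= \int[mu]_x `|h x|%:E.
  apply: le_trans (le_abse_integral mu measurableT mAh) _.
  under eq_integral do rewrite abse_EFin.
  apply: ge0_le_integral => //.
  - apply/measurable_EFinP; apply: measurableT_comp; first exact: normr_measurable.
    by apply: measurable_funM => //; exact: measurable_indic.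
  - by apply/measurable_EFinP; apply: measurableT_comp => //; exact: normr_measurable.
  move=> x _; rewrite lee_fin normrM ler_piMl //.
  by rewrite indicE; case: (x \in A); rewrite ?normr1 ?normr0.
by case: (inner mu \1_A h) => [r| |] //= _;
  rewrite normr0; apply: integral_ge0 => x _; rewrite lee_fin.
Qed.

End square_integrable.

Section operator_limit.
Context {R : realType} (mu : {measure set R -> \bar R}).
Local Open Scope ereal_scope.

Lemma measurable_Km m f : measurable_fun setT (Km mu m f).
Proof.
apply: measurable_sum => k; apply: measurable_sum => u.
apply: measurable_funM; first exact: measurable_cst.
by apply: measurable_indic; exact: measurable_Cw.
Qed.

Lemma opnorm_limit_ae K (f g : R -> R) :
  opnorm_limit mu K -> L2 mu f -> measurable_fun setT g ->
  (forall e : R, (0 < e)%R ->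
     \forall m \near \oo, sqnorm mu (fun x => Km mu m f x - g x)%R <= e%:E) ->
  aeeq mu (K f) g.
Proof.
move=> [KL2 Klim] Lf mg Kmg; have mKf := (KL2 f Lf).1.
suff : {ae mu, forall x, K f x - g x = 0}%R.
  by apply: filterS => x /eqP; rewrite subr_eq0 => /eqP.
apply: sqnorm_eq0; first exact: measurable_funB.
apply/eqP; rewrite eq_le sqnorm_ge0 andbT; apply/lee_addgt0Pr => e e0; rewrite add0e.
set s := fine (sqnorm mu f).
have s0 : (0 <= s)%R by rewrite fine_ge0 // sqnorm_ge0.
pose e1 := (e / 4 / (s + 1))%R.
have e1_gt0 : (0 < e1)%R by rewrite !divr_gt0 //; lra.
have e1s : (e1 * s <= e / 4)%R.
  have s1 : (s + 1 != 0)%R by apply: lt0r_neq0; lra.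
  by rewrite -[X in (_ <= X)%R](divfK s1) ler_wpM2l ?ltW //; lra.
have [M KmK] := Klim _ e1_gt0.
have [N _ Kmg_e] := Kmg (e / 4)%R (ltac:(lra)).
pose m := maxn M N.
have -> : (fun x => K f x - g x)%R =
    (fun x => - (Km mu m f x - K f x) + (Km mu m f x - g x))%R.
  by apply/funext => x; ring.
apply: le_trans (sqnormD_le _ _ _) _.
- by apply: measurable_funN; apply: measurable_funB => //; exact: measurable_Km.
- by apply: measurable_funB => //; exact: measurable_Km.
rewrite sqnormN.
have := KmK m (leq_maxl M N) f Lf; rewrite (L2_sqnormE Lf) -EFinM => Km_K.
have := Kmg_e m (leq_maxr M N) => Km_g.
apply: le_trans (leeD (lee_wpmul2l _ Km_K) (lee_wpmul2l _ Km_g)) _ => //.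
by rewrite -!EFinM -EFinD lee_fin -/s; lra.
Qed.

End operator_limit.

Section probability_bounds.
Context {R : realType} (mu : {measure set R -> \bar R}).
Hypothesis muT : mu setT = 1%E.
Local Open Scope ereal_scope.

Lemma integral_cst_prob (a : R) : \int[mu]_x a%:E = a%:E.
Proof. by rewrite (integral_cst mu measurableT) muT mule1. Qed.

(* Integrated form of [|y| <= t/2 + y^2/(2t)]. *)
Lemma integral_abs_le_amgm (h : R -> R) (t : R) : (0 < t)%R -> measurable_fun setT h ->
  \int[mu]_x `|h x|%:E <= (t / 2)%:E + (2 * t)^-1%:E * sqnorm mu h.
Proof.
move=> t0 mh; have t2 : (0 <= (2 * t)^-1)%R by rewrite invr_ge0; lra.
have mh2 := measurable_EFin_sqr mh.
rewrite -integral_cst_prob /sqnorm -ge0_integralZl_EFin //; last first.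
  by move=> x _; rewrite lee_fin sqr_ge0.
rewrite -ge0_integralD //; first last.
- by apply: emeasurable_funM => //; exact: measurable_cst.
- by move=> x _; rewrite -EFinM lee_fin mulr_ge0 ?sqr_ge0.
- by move=> x _; rewrite lee_fin; lra.
apply: ge0_le_integral => //.
- by apply/measurable_EFinP; apply: measurableT_comp => //; exact: normr_measurable.
- apply: emeasurable_funD; first exact: measurable_cst.
  by apply: emeasurable_funM => //; exact: measurable_cst.
move=> x _; rewrite -EFinM -EFinD lee_fin -real_normK ?num_real // -subr_ge0.
have -> : (t / 2 + (2 * t)^-1 * `|h x| ^+ 2 - `|h x| = (`|h x| - t) ^+ 2 / (2 * t))%R.
  by field; rewrite lt0r_neq0.
by rewrite divr_ge0 ?sqr_ge0 //; lra.
Qed.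

Lemma inner_indic_le_sqrt (A : set R) (h : R -> R) : measurable A -> L2 mu h ->
  (`|fine (inner mu \1_A h)| <= Num.sqrt (fine (sqnorm mu h)))%R.
Proof.
move=> mA Lh; have mh := Lh.1; set s := fine (sqnorm mu h).
have s0 : (0 <= s)%R by rewrite fine_ge0 // sqnorm_ge0.
set J := \int[mu]_x `|h x|%:E.
have J0 : 0 <= J by apply: integral_ge0 => x _; rewrite lee_fin.
have JE : J = (fine J)%:E.
  rewrite fineK // ge0_fin_numE //.
  apply: le_lt_trans (integral_abs_le_amgm ltr01 mh) _.
  by rewrite (L2_sqnormE Lh) -EFinM -EFinD ltry.
have I0 : (0 <= fine J)%R by rewrite fine_ge0.
apply: (@le_trans _ _ (fine J)); first by rewrite -lee_fin -JE abs_inner_indic_le.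
(* AM-GM at t = \int |h| itself gives (\int |h|)^2 <= ||h||^2. *)
have [->|Ipos] := eqVneq (fine J) 0%R; first exact: sqrtr_ge0.
have Igt0 : (0 < fine J)%R by rewrite lt_def Ipos.
have := integral_abs_le_amgm Igt0 mh.
rewrite -/J (L2_sqnormE Lh) -/s JE -EFinM -EFinD lee_fin => amgm.
rewrite -(ger0_norm I0) -sqrtr_sqr ler_sqrt // -subr_ge0.
have gapE : (fine J / 2 + (2 * fine J)^-1 * s - fine J =
    (s - fine J ^+ 2) / (2 * fine J))%R by field; rewrite lt0r_neq0.
by move: amgm; rewrite -subr_ge0 gapE pmulr_lge0 // invr_gt0 mulr_gt0.
Qed.

Lemma sqnorm_Km_le m (h : R -> R) : L2 mu h ->
  sqnorm mu (Km mu m h) <=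
    (((\sum_(k < m.+1) \sum_(u : k.-tuple bool) 1) ^+ 2) * fine (sqnorm mu h))%:E.
Proof.
move=> Lh; set n := (\sum_(k < m.+1) _)%R; set s := fine (sqnorm mu h).
have s0 : (0 <= s)%R by rewrite fine_ge0 // sqnorm_ge0.
have Km_le x : (`|Km mu m h x| <= n * Num.sqrt s)%R.
  apply: le_trans (ler_norm_sum _ _ _) _; rewrite mulr_suml; apply: ler_sum => k _.
  apply: le_trans (ler_norm_sum _ _ _) _; rewrite mulr_suml; apply: ler_sum => u _.
  rewrite mul1r normrM -[X in (_ <= X)%R]mulr1 ler_pM //.
    by apply: inner_indic_le_sqrt => //; exact: measurable_Cw.
  by rewrite indicE; case: (_ \in _); rewrite ?normr1 ?normr0.
rewrite /sqnorm -integral_cst_prob; apply: ge0_le_integral => //.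
- by move=> x _; rewrite lee_fin sqr_ge0.
- by apply: measurable_EFin_sqr; exact: measurable_Km.
move=> x _; rewrite lee_fin -(sqr_sqrtr s0) -exprMn -real_normK ?num_real //.
by rewrite lerXn2r ?nnegrE ?mulr_ge0 ?sqrtr_ge0 ?sumr_ge0 // => k _; rewrite sumr_ge0.
Qed.

Lemma opnorm_limit_bounded K : opnorm_limit mu K -> forall a : R,
  exists2 c : R, (a < c)%R &
    forall h, L2 mu h -> sqnorm mu (K h) <= (c ^+ 2)%:E * sqnorm mu h.
Proof.
move=> [KL2 Klim] a; have [M KmK] := Klim 1%R ltr01.
pose n : R := (\sum_(k < M.+1) \sum_(u : k.-tuple bool) 1)%R.
exists (`|a| + 2 * n ^+ 2 + 2)%R; first by have := sqr_ge0 n; have := ler_norm a; lra.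
move=> h Lh; have mKh := (KL2 h Lh).1; set s := fine (sqnorm mu h).
have s0 : (0 <= s)%R by rewrite fine_ge0 // sqnorm_ge0.
have -> : K h = (fun x => Km mu M h x + - (Km mu M h x - K h x))%R.
  by apply/funext => x; ring.
apply: le_trans (sqnormD_le _ (measurable_Km _ _ _) _) _.
  by apply: measurable_funN; apply: measurable_funB => //; exact: measurable_Km.
rewrite sqnormN (L2_sqnormE Lh) -/s.
have := KmK M (leqnn M) h Lh; rewrite (L2_sqnormE Lh) -/s mul1e => Km_K.
apply: le_trans (leeD (lee_wpmul2l _ (sqnorm_Km_le M Lh)) (lee_wpmul2l _ Km_K)) _ => //.
rewrite -!EFinM -EFinD lee_fin -/n -/s.
have c2 : (2 * n ^+ 2 + 2 <= (`|a| + 2 * n ^+ 2 + 2) ^+ 2)%R.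
  by have := sqr_ge0 n; have := normr_ge0 a; nra.
by nra.
Qed.

End probability_bounds.

Section cantor_operator.
Context {R : realType} (mu : {measure set R -> \bar R}).
Hypothesis mu_cantor : cantor_measure mu.
Local Notation ph := (@phi R).

Lemma measurable_phi : measurable_fun setT ph.
Proof. by apply: measurable_indic; exact: measurable_cantor_set. Qed.

Lemma phi_sqr x : ph x ^+ 2 = ph x.
Proof. by rewrite /phi indicE; case: (x \in _); rewrite ?expr1n ?expr0n. Qed.

Lemma integral_scaled_phi (a : R) : (\int[mu]_x (a * ph x)%:E = a%:E)%E.
Proof.
rewrite integral_scaled_indic ?(mu_cantor_set mu_cantor) ?mule1 //.
exact: measurable_cantor_set.
Qed.

Lemma sqnorm_scaled_phi (a : R) : sqnorm mu (fun x => a * ph x) = (a ^+ 2)%:E.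
Proof.
by rewrite -integral_scaled_phi; apply: eq_integral => x _; rewrite exprMn phi_sqr.
Qed.

Lemma L2_phi : L2 mu ph.
Proof.
split; first exact: measurable_phi.
have -> : ph = (fun x => 1 * ph x) by apply/funext => x; rewrite mul1r.
by rewrite sqnorm_scaled_phi ltry.
Qed.

Lemma inner_scaled_phi f (c : R) :
  measurable_fun setT f -> aeeq mu f (fun x => c * ph x) ->
  inner mu ph f = c%:E.
Proof.
move=> mf fE; rewrite /inner -integral_scaled_phi; apply: ae_eq_integral => //.
- by apply/measurable_EFinP; apply: measurable_funM => //; exact: measurable_phi.
- by apply/measurable_EFinP; apply: measurable_funM;
    [exact: measurable_cst|exact: measurable_phi].
by apply: filterS fE => x -> _; rewrite mulrCA -expr2 phi_sqr.
Qed.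

Lemma inner_indic_Cw f (c : R) u : measurable_fun setT f ->
  aeeq mu f (fun x => c * ph x) -> inner mu \1_(Cw u) f = (c * (2^-1) ^+ size u)%:E.
Proof.
move=> mf fE; have mCu : measurable_fun setT (\1_(Cw u) : R -> R).
  by apply: measurable_indic; exact: measurable_Cw.
rewrite /inner (ae_eq_integral (fun x => (c * \1_(Cw u) x)%:E)) //.
- by rewrite integral_scaled_indic ?(mu_Cw mu_cantor) -?EFinM //; exact: measurable_Cw.
- by apply/measurable_EFinP; apply: measurable_funM.
- by apply/measurable_EFinP; apply: measurable_funM => //; exact: measurable_cst.
apply: filterS fE => x -> _; rewrite /phi !indicE.
have [/set_mem/Cw_sub/mem_set ->|] := boolP (x \in Cw u); first by rewrite mulr1 mul1r.
by rewrite mul0r mulr0.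
Qed.

Lemma sum_halfX m : \sum_(k < m.+1) (2^-1 : R) ^+ k = 2 - (2^-1) ^+ m.
Proof.
elim: m => [|m IH]; first by rewrite big_ord1 !expr0; lra.
by rewrite big_ord_recr /= IH exprS; lra.
Qed.

Lemma Km_scaled_phi f (c : R) m : measurable_fun setT f ->
  aeeq mu f (fun x => c * ph x) ->
  Km mu m f = (fun x => c * (2 - (2^-1) ^+ m) * ph x).
Proof.
move=> mf fE; apply/funext => x; rewrite /Km -sum_halfX mulr_sumr mulr_suml.
apply: eq_bigr => k _; rewrite -(sum_indic_Cw k x) mulr_sumr.
by apply: eq_bigr => u _; rewrite (inner_indic_Cw _ mf fE) /= size_tuple.
Qed.

Lemma K_scaled_phi K f (c : R) : opnorm_limit mu K -> L2 mu f ->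
  aeeq mu f (fun x => c * ph x) -> aeeq mu (K f) (fun x => 2 * c * ph x).
Proof.
move=> HK Lf fE; have mf := Lf.1.
apply: opnorm_limit_ae => //.
  by apply: measurable_funM; [exact: measurable_cst|exact: measurable_phi].
move=> e e0; have e'0 : 0 < e / (c ^+ 2 + 1) by rewrite divr_gt0 //; nra.
apply: filterS (near_infty_natSinv_expn_lt (PosNum e'0)) => m /=.
rewrite (Km_scaled_phi _ mf fE) div1r -exprVn => small.
have -> : (fun x => c * (2 - (2^-1) ^+ m) * ph x - 2 * c * ph x) =
    (fun x => - (c * (2^-1) ^+ m) * ph x) by apply/funext => x; ring.
rewrite sqnorm_scaled_phi lee_fin sqrrN exprMn.
have t0 : 0 <= (2^-1 : R) ^+ m by rewrite exprn_ge0.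
have t1 : (2^-1 : R) ^+ m <= 1 by rewrite exprn_ile1 // invf_le1; lra.
move: small; rewrite ltr_pdivlMr; last nra.
by nra.
Qed.

End cantor_operator.

Section cantor_eigenvector.
Context {R : realType} (mu : {measure set R -> \bar R}) (K : (R -> R) -> R -> R).
Hypotheses (mu_cantor : cantor_measure mu) (HK : opnorm_limit mu K).
Local Notation ph := (@phi R).

Lemma K_phi : aeeq mu (K ph) (fun x => 2 * ph x).
Proof.
have phiE : aeeq mu ph (fun x => 1 * ph x) by apply: filterE => x; rewrite mul1r.
by apply: filterS (K_scaled_phi mu_cantor HK (L2_phi mu_cantor) phiE) => x; rewrite mulr1.
Qed.

Lemma iter_K_phi n :
  L2 mu (iter n K ph) /\ aeeq mu (iter n K ph) (fun x => 2 ^+ n * ph x).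
Proof.
elim: n => [|n [Ln En]].
  by split; [exact: L2_phi|apply: filterE => x; rewrite mul1r].
split; first exact: HK.1.
by apply: filterS (K_scaled_phi mu_cantor HK Ln En) => x /= ->; rewrite exprS.
Qed.

Lemma inner_phi_iter_K n : inner mu ph (iter n K ph) = (2 ^+ n)%:E.
Proof. by have [[mKn _] En] := iter_K_phi n; apply: inner_scaled_phi. Qed.

End cantor_eigenvector.

Section inv_floor.
Context {R : realType}.
Variable e : R.
Hypothesis e_gt0 : 0 < e.

Definition inv_floor (u : R) : R := (Num.max u e)^-1.

Lemma max_floor_gt0 u : 0 < Num.max u e.
Proof. by rewrite lt_max e_gt0 orbT. Qed.

Lemma measurable_inv_floor : measurable_fun setT inv_floor.
Proof.
apply: nonincreasing_measurable => // u v uv.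
by rewrite /inv_floor lef_pV2 ?posrE ?max_floor_gt0 // ge_max !le_max uv lexx orbT.
Qed.

Lemma inv_floor_ge0 u : 0 <= inv_floor u.
Proof. by rewrite invr_ge0 ltW // max_floor_gt0. Qed.

Lemma inv_floor_le u : inv_floor u <= e^-1.
Proof. by rewrite lef_pV2 ?posrE ?max_floor_gt0 // le_max lexx orbT. Qed.

Lemma mul_inv_floor_le1 u : 0 <= u -> u * inv_floor u <= 1.
Proof.
move=> u0; rewrite ler_pdivrMr ?max_floor_gt0 // mul1r.
by rewrite le_max lexx.
Qed.

Lemma inv_floor_id u : e <= u -> inv_floor u = u^-1.
Proof. by move=> eu; rewrite /inv_floor (max_idPl eu). Qed.

End inv_floor.

Section bounded_borel_functions.
Context {R : realType}.

Lemma bounded_borel_cst (a : R) : bounded_borel (cst a).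
Proof. by split; [exact: measurable_cst|exists `|a|]. Qed.

Lemma bounded_borel_indic (A : set R) : measurable A -> bounded_borel (\1_A : R -> R).
Proof.
move=> mA; split; first exact: measurable_indic.
by exists 1 => x; rewrite indicE; case: (x \in A); rewrite ?normr1 ?normr0.
Qed.

End bounded_borel_functions.

Section quotient_approximation.
Context {R : realType}.
Variables g y : R -> R.

Definition quot_approx n x : R := g x * y x * inv_floor n.+1%:R^-1 `|y x| ^+ 2.

Let r_ge0 n (u : R) : 0 <= inv_floor n.+1%:R^-1 u.
Proof. exact: inv_floor_ge0. Qed.

Lemma quot_approx_mulE n x :
  quot_approx n x * y x = g x * (`|y x| * inv_floor n.+1%:R^-1 `|y x|) ^+ 2.
Proof. by rewrite /quot_approx exprMn real_normK ?num_real //; ring. Qed.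

Lemma bounded_borel_quot_approx n : bounded_borel g -> measurable_fun setT y ->
  bounded_borel (quot_approx n).
Proof.
move=> [mg [B gB]] my; split.
  apply: measurable_funM; first exact: measurable_funM.
  apply: measurable_funX; apply: measurableT_comp; first exact: measurable_inv_floor.
  by apply: measurableT_comp => //; exact: normr_measurable.
exists (B * n.+1%:R) => x; pose r := inv_floor n.+1%:R^-1 `|y x|.
have r0 : 0 <= r := r_ge0 n _.
have -> : `|quot_approx n x| = `|g x| * (`|y x| * r * r).
  by rewrite /quot_approx !normrM (ger0_norm (r_ge0 _ _)) /r; ring.
apply: ler_pM; rewrite ?mulr_ge0 //.
rewrite -[X in _ <= X]mul1r; apply: ler_pM; rewrite ?mulr_ge0 ?mul_inv_floor_le1 //.
by rewrite -[X in _ <= X]invrK; exact: inv_floor_le.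
Qed.

Lemma quot_approx_mul_le n x B :
  (forall x, `|g x| <= B) -> `|quot_approx n x * y x| <= B.
Proof.
move=> gB; rewrite quot_approx_mulE normrM -[X in _ <= X]mulr1 ler_pM //.
rewrite ger0_norm ?sqr_ge0 // expr2 -[X in _ <= X]mulr1.
by rewrite ler_pM ?mulr_ge0 ?mul_inv_floor_le1.
Qed.

Lemma quot_approx_mul_cvg x : (y x = 0 -> g x = 0) ->
  quot_approx n x * y x @[n --> \oo] --> g x.
Proof.
move=> gy0; apply: cvg_near_cst; have [y0|ynz] := eqVneq (y x) 0.
  by apply: nearW => n; rewrite y0 mulr0 gy0.
have ypos : 0 < `|y x| by rewrite normr_gt0.
apply: filterS (near_infty_natSinv_lt (PosNum ypos)) => n /= small.
by rewrite quot_approx_mulE inv_floor_id ?ltW // mulfV ?normr_eq0 // expr1n mulr1.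
Qed.

End quotient_approximation.

Section borel_functional_calculus.
Context {R : realType} (mu : {measure set R -> \bar R}).
Variables (K : (R -> R) -> R -> R) (Phi : (R -> R) -> (R -> R) -> R -> R).
Hypothesis FC : borel_fcalc mu K Phi.

Lemma L2_cst0 : L2 mu (cst 0).
Proof.
split; first exact: measurable_cst.
by rewrite /sqnorm (eq_integral (cst 0%E)) ?integral0 // => x _; rewrite expr0n.
Qed.

Lemma fcalc_cst0 q : bounded_borel q -> aeeq mu (Phi q (cst 0)) (cst 0).
Proof.
move=> bq; have := fc_linear FC 1 bq L2_cst0 L2_cst0.
have -> : (fun x : R => cst 0 x + 1 * cst 0 x) = cst 0 :> (R -> R).
  by apply/funext => x; rewrite /= mulr0 addr0.
by apply: filterS => x /=; lra.
Qed.

(* [g] is the bounded pointwise limit of [quot_approx g y n * y], and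
   [Phi (quot_approx g y n * y) h = Phi (quot_approx g y n) (Phi y h) = 0]. *)
Lemma fcalc_vanish y g h : bounded_borel y -> bounded_borel g -> L2 mu h ->
  aeeq mu (Phi y h) (cst 0) -> (forall x, y x = 0 -> g x = 0) ->
  aeeq mu (Phi g h) (cst 0).
Proof.
move=> by_ bg Lh yh0 gy0; have [my _] := by_; have [mg [Bg gB]] := bg.
pose G n x := quot_approx g y n x * y x.
have bq n := bounded_borel_quot_approx n bg my.
have mG n : measurable_fun setT (G n) by apply: measurable_funM => //; case: (bq n).
have GB n x : `|G n x| <= Bg by exact: quot_approx_mul_le.
have PhiG0 n : aeeq mu (Phi (G n) h) (cst 0).
  apply: filterS3 (fc_mul FC (bq n) by_ Lh)
    (fc_ae FC (bq n) (fc_L2 FC by_ Lh) L2_cst0 yh0) (fcalc_cst0 (bq n)).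
  by move=> x -> -> ->.
have mPg := (fc_L2 FC bg Lh).1.
have := fc_cont FC mG GB (fun x => quot_approx_mul_cvg (gy0 x)) Lh.
have -> : (fun n => sqnorm mu (fun x => Phi (G n) h x - Phi g h x)) =
    cst (sqnorm mu (Phi g h)).
  apply/funext => n /=; rewrite -[in RHS]sqnormN; apply: sqnorm_ae_eq.
  - apply: measurable_funB => //.
    exact: (fc_L2 FC (conj (mG n) (ex_intro _ Bg (GB n))) Lh).1.
  - exact: measurable_funN.
  - by apply: filterS (PhiG0 n) => x ->; rewrite sub0r.
move=> /(cvg_lim (@ereal_hausdorff R)); rewrite (lim_cst (@ereal_hausdorff R)).
exact: sqnorm_eq0.
Qed.

End borel_functional_calculus.

Section clamp.
Context {R : realType}.
Implicit Types c a x : R.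

Lemma normr_clamp_le c x : 0 <= c -> `|clamp c x| <= c.
Proof.
by move=> c0; rewrite ler_norml le_max ge_max ge_min !lexx /= andbT; lra.
Qed.

Lemma clamp_eq c a x : `|a| < c -> clamp c x = a -> x = a.
Proof.
rewrite ltr_norml => /andP[? ?].
by rewrite /clamp minEle maxEle; case: (lerP c x) => ?; case: lerP => ?; lra.
Qed.

Lemma bounded_borel_clamp c : 0 <= c -> bounded_borel (clamp c).
Proof.
move=> c0; split; last by exists c => x; exact: normr_clamp_le.
apply: measurable_maxr; first exact: measurable_cst.
by apply: measurable_minr; [exact: measurable_cst|exact: measurable_id].
Qed.

End clamp.

Section cantor_spectral_measure.
Context {R : realType} (mu : {measure set R -> \bar R}).
Variables (K : (R -> R) -> R -> R) (Phi : (R -> R) -> (R -> R) -> R -> R).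
Hypotheses (mu_cantor : cantor_measure mu) (HK : opnorm_limit mu K).
Hypothesis FC : borel_fcalc mu K Phi.
Local Notation ph := (@phi R).

Lemma fcalc_phi_vanish g : bounded_borel g -> g 2 = 0 -> aeeq mu (Phi g ph) (cst 0).
Proof.
move=> bg g2; have [muT _ _] := mu_cantor; have Lph := L2_phi mu_cantor.
have [c c2 Kc] := opnorm_limit_bounded muT HK 2.
have c0 : 0 <= c by apply: le_trans (ltW c2); rewrite ler0n.
have bclamp := bounded_borel_clamp c0.
pose y x := clamp c x + (-2) * cst 1 x.
have by_ : bounded_borel y.
  split; first by apply: measurable_funD; [exact: bclamp.1|exact: measurable_funM].
  exists (c + 2) => x; rewrite /y /= mulr1; apply: le_trans (ler_normD _ _) _.
  by rewrite lerD ?normr_clamp_le ?normrN ?ger0_norm //; lra.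
apply: (fcalc_vanish FC by_ bg Lph); last first.
  move=> x /eqP; rewrite /y /= mulr1 addr_eq0 opprK => /eqP /clamp_eq -> //.
  by rewrite ger0_norm.
have yE : aeeq mu (Phi y ph) (fun x => Phi (clamp c) ph x + -2 * Phi (cst 1) ph x).
  by have := fc_add FC (-2) bclamp (bounded_borel_cst 1) Lph.
have Kph : aeeq mu (K ph) (fun x => 2 * Phi (cst 1) ph x).
  by apply: filterS2 (K_phi mu_cantor HK) (fc_one FC Lph) => x -> ->.
apply: filterS3 yE (fc_id FC c0 Kc Lph) Kph => x /= -> -> ->; lra.
Qed.

Lemma inner_phi_fcalc f : bounded_borel f -> inner mu ph (Phi f ph) = (f 2)%:E.
Proof.
move=> bf; have Lph := L2_phi mu_cantor.
pose g x := f x - f 2.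
have bg : bounded_borel g.
  have [mf [B fB]] := bf; split.
    by apply: measurable_funB => //; exact: measurable_cst.
  by exists (B + `|f 2|) => x; apply: le_trans (ler_normB _ _) _; rewrite lerD.
have fE : f = (fun x => g x + f 2 * cst 1 x).
  by apply/funext => x; rewrite /g /= mulr1 subrK.
apply: (inner_scaled_phi (c := f 2) mu_cantor (fc_L2 FC bf Lph).1).
have PhifE : aeeq mu (Phi f ph) (fun x => Phi g ph x + f 2 * Phi (cst 1) ph x).
  by rewrite {1}fE; have := fc_add FC (f 2) bg (bounded_borel_cst 1) Lph.
apply: filterS3 PhifE (fcalc_phi_vanish bg (subrr _)) (fc_one FC Lph) => x -> -> ->.
by rewrite add0r.
Qed.

End cantor_spectral_measure.

Theorem corollary7p5 (R : realType) (mu : {measure set R -> \bar R})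
    (K : (R -> R) -> R -> R) :
  cantor_measure mu -> opnorm_limit mu K ->
  [/\ aeeq mu (K (@phi R)) (fun x => 2 * @phi R x),
      forall n : nat, inner mu (@phi R) (iter n K (@phi R)) = (2 ^+ n)%:E
    & forall Phi, borel_fcalc mu K Phi ->
      forall nu : {finite_measure set R -> \bar R},
        (forall f, bounded_borel f ->
           inner mu (@phi R) (Phi f (@phi R)) = (\int[nu]_x (f x)%:E)%E) <->
        (forall A : set R, measurable A -> nu A = \d_(2 : R) A)].
Proof.
move=> mu_cantor HK; split.
- exact: K_phi.
- exact: inner_phi_iter_K.
move=> Phi FC nu; split=> [nuE A mA|nuE f bf].
- have bA := bounded_borel_indic mA.
  move: (nuE _ bA); rewrite (inner_phi_fcalc mu_cantor HK FC bA).
  by rewrite integral_indic // setIT => <-; rewrite diracE indicE.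
- rewrite (inner_phi_fcalc mu_cantor HK FC bf).
  rewrite (eq_measure_integral \d_(2 : R)) => [|A mA _]; last exact: nuE.
  by rewrite integral_dirac ?diracE ?mem_set ?mul1e //; apply/measurable_EFinP; case: bf.
Qed.
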